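(* Let $\{\varphi_n\},\{\psi_n\}$ be biorthogonal sequences in a Hilbert space $\mathcal H$ forming a $(\mathcal D,\mathcal E)$-quasi basis for dense subspaces $\mathcal D,\mathcal E$ with $D_\psi\subseteq\mathcal D\subseteq D(\varphi)$, $D_\varphi\subseteq\mathcal E\subseteq D(\psi)$. Let $\{f_n\}$ be an ONB such that $\overline{T_{f,\varphi}|_{\mathcal D}}$ is positive self-adjoint and $(\{f_n\},\overline{T_{f,\varphi}|_{\mathcal D}})$ is a constructing pair for $\{\varphi_n\}$, and let $\{g_n\}$ be an ONB such that $\overline{T_{g,\psi}|_{\mathcal E}}$ is positive self-adjoint and $(\{g_n\},\overline{T_{g,\psi}|_{\mathcal E}})$ is a constructing pair for $\{\psi_n\}$. Let $\alpha=\{\alpha_n\}$ be a real sequence with $0\le\alpha_0<\alpha_n<\alpha_{n+1}$ and $\alpha_{n+1}\le\alpha_n+r$ for all $n\ge1$, for some $r>0$. Then: (1) If $D^\infty(H_f^\alpha)\subseteq\mathcal D$ and $T_{f,\varphi}D^\infty(H_f^\alpha)$ is dense in $\mathcal H$, then, with $T_\varphi^0:=\overline{T_{f,\varphi}|_{D^\infty(H_f^\alpha)}}$, the pair $(\{f_n\},T_\varphi^0)$ is a constructing pair for $\{\varphi_n\}$, and the operators $H_\varphi^0:=T_\varphi^0H_f^\alpha(T_\varphi^0)^{-1}$, $A_\varphi^0:=T_\varphi^0A_f^\alpha(T_\varphi^0)^{-1}$, $B_\varphi^0:=T_\varphi^0B_f^\alpha(T_\varphi^0)^{-1}$ all belong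 to $\mathcal L(T_\varphi^0D^\infty(H_f^\alpha))$. (2) If $D^\infty(H_g^\alpha)\subseteq\mathcal E$ and $T_{g,\psi}D^\infty(H_g^\alpha)$ is dense in $\mathcal H$, then, with $T_\psi^0:=\overline{T_{g,\psi}|_{D^\infty(H_g^\alpha)}}$, the pair $(\{g_n\},T_\psi^0)$ is a constructing pair for $\{\psi_n\}$, and $H_\psi^0:=T_\psi^0H_g^\alpha(T_\psi^0)^{-1}$, $A_\psi^0:=T_\psi^0A_g^\alpha(T_\psi^0)^{-1}$, $B_\psi^0:=T_\psi^0B_g^\alpha(T_\psi^0)^{-1}$ all belong to $\mathcal L(T_\psi^0D^\infty(H_g^\alpha))$.
   Context: Inner product linear in the first argument. Biorthogonal: $\langle\varphi_n,\psi_m\rangle=\delta_{nm}$. $D_\varphi,D_\psi$ are the linear spans; $D(\varphi)=\{x:\sum_n|\langle x,\varphi_n\rangle|^2<\infty\}$, similarly $D(\psi)$. The pair is a $(\mathcal D,\mathcal E)$-quasi basis if $\sum_k\langle x,\varphi_k\rangle\langle\psi_k,y\rangle=\langle x,y\rangle$ for all $x\in\mathcal D$, $y\in\mathcal E$. For an ONB $\{f_n\}$, $T_{f,\varphi}$ has domain $D(\varphi)$ and $T_{f,\varphi}x=\sum_n\langle x,\varphi_n\rangle f_n$ (similarly $T_{g,\psi}$ on $D(\psi)$); bar is closure, $|$ restriction. A constructing pair for $\{\chi_n\}$ is $(\{f_n\},S)$ with $\{f_n\}$ an ONB, $S$ densely defined closed with densely defined inverse, $f_n\in D(S)\cap D((S^{-1})^*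 )$, $Sf_n=\chi_n$. For an ONB $\{f_n\}$: $H_f^\alpha x=\sum_n\alpha_n\langle x,f_n\rangle f_n$, $A_f^\alpha x=\sum_n\alpha_{n+1}\langle x,f_{n+1}\rangle f_n$, $B_f^\alpha x=\sum_n\alpha_{n+1}\langle x,f_n\rangle f_{n+1}$, each on the maximal domain of $x$ for which the coefficient sequence is square summable. $D^\infty(H)=\bigcap_{n\ge1}D(H^n)$. For a subspace $\mathcal D_0$, $\mathcal L(\mathcal D_0)$ is the algebra of linear operators from $\mathcal D_0$ into $\mathcal D_0$; an operator ''belongs to'' $\mathcal L(\mathcal D_0)$ if $\mathcal D_0$ is in its domain and is mapped into itself. *)

(* A complex Hilbert space is modelled as a complete
   normed module H over C := R[i] (R : realType) together with an inner product
   ip (linear in the first argument) inducing the norm.  (Possibly unbounded)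
   linear operators are represented by their graphs  G : set (H * H). *)
From HB Require Import structures.
From mathcomp Require Import all_boot all_order all_algebra.
From mathcomp Require Import all_classical all_reals all_analysis.
From mathcomp Require Import complex.
Set Implicit Arguments. Unset Strict Implicit. Unset Printing Implicit Defensive.
Import Order.TTheory GRing.Theory Num.Theory.
Import numFieldNormedType.Exports.
Local Open Scope ring_scope.
Local Open Scope complex_scope.
Local Open Scope classical_set_scope.

Section Defs.
Context {R : realType} {H : completeNormedModType R[i]}.
Variable ip : H -> H -> R[i].

Definition is_inner_product : Prop :=
  [/\ (forall x y z, ip (x + y) z = ip x z + ip y z),
      (forall (a : R[i]) x y, ip (a *: x) y = a * ip x y),
      (forall x y, ip y x = (ip x y)^*) &
      (forall x, ip x x = `|x| ^+ 2)].

Definition biorthogonal (phi psi : nat -> H) : Prop :=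
  forall n m, ip (phi n) (psi m) = (n == m)%:R.

Definition ONB (f : nat -> H) : Prop :=
  (forall n m, ip (f n) (f m) = (n == m)%:R) /\
  (forall x, (forall n, ip x (f n) = 0) -> x = 0).

Definition lin_span (phi : nat -> H) : set H :=
  [set x | exists (N : nat) (c : nat -> R[i]), x = \sum_(i < N) c i *: phi i].

Definition sq_summable (c : nat -> R[i]) : Prop :=
  exists l : R[i], series (fun n => `|c n| ^+ 2) @ \oo --> (l : R[i]^o).

Definition coef_dom (phi : nat -> H) : set H :=
  [set x | sq_summable (fun n => ip x (phi n))].

Definition subspace (D : set H) : Prop :=
  [/\ D 0, (forall x y, D x -> D y -> D (x + y)) &
      (forall (a : R[i]) x, D x -> D (a *: x))].

Definition dense_subspace (D : set H) : Prop := subspace D /\ dense D.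

Definition quasi_basis (phi psi : nat -> H) (D E : set H) : Prop :=
  forall x y, D x -> E y ->
    series (fun k => ip x (phi k) * ip (psi k) y) @ \oo --> (ip x y : R[i]^o).

Definition op_dom (G : set (H * H)) : set H := [set x | exists y, G (x, y)].
Definition op_image (G : set (H * H)) (A : set H) : set H :=
  [set y | exists x, A x /\ G (x, y)].

Definition is_operator (G : set (H * H)) : Prop :=
  [/\ G (0, 0),
      (forall p q, G p -> G q -> G (p.1 + q.1, p.2 + q.2)),
      (forall (a : R[i]) p, G p -> G (a *: p.1, a *: p.2)) &
      (forall x y1 y2, G (x, y1) -> G (x, y2) -> y1 = y2)].

Definition op_closure (G : set (H * H)) : set (H * H) := closure G.
Definition op_closed (G : set (H * H)) : Prop := closed G.
Definition op_restr (G : set (H * H)) (D : set H) : set (H * H) :=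
  [set p | G p /\ D p.1].
Definition op_inv (G : set (H * H)) : set (H * H) := [set p | G (p.2, p.1)].
(* composition  A B  (apply B first, then A) *)
Definition op_comp (A B : set (H * H)) : set (H * H) :=
  [set p | exists y, B (p.1, y) /\ A (y, p.2)].
Fixpoint op_pow (G : set (H * H)) (n : nat) : set (H * H) :=
  match n with
  | O => [set p | p.1 = p.2]
  | S m => op_comp G (op_pow G m)
  end.
Definition op_adjoint (G : set (H * H)) : set (H * H) :=
  [set p | forall q, G q -> ip q.2 p.1 = ip q.1 p.2].

Definition self_adjoint (G : set (H * H)) : Prop :=
  is_operator G /\ dense (op_dom G) /\ G = op_adjoint G.
Definition positive_op (G : set (H * H)) : Prop :=
  forall p, G p -> 0 <= ip p.2 p.1.

Definition Dinf (G : set (H * H)) : set H :=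
  [set x | forall n, (1 <= n)%N -> op_dom (op_pow G n) x].

Definition in_L (G : set (H * H)) (D0 : set H) : Prop :=
  forall x, D0 x -> op_dom G x /\ (forall y, G (x, y) -> D0 y).

Definition T_op (f phi : nat -> H) : set (H * H) :=
  [set p | coef_dom phi p.1 /\
           series (fun n => ip p.1 (phi n) *: f n) @ \oo --> p.2].

Definition constructing_pair (f : nat -> H) (S : set (H * H)) (chi : nat -> H)
  : Prop :=
  [/\ ONB f, is_operator S, dense (op_dom S), op_closed S &
      [/\ is_operator (op_inv S) (* S is injective: S^{-1} exists *),
      dense (op_dom (op_inv S)) &
      (forall n, [/\ op_dom S (f n), op_dom (op_adjoint (op_inv S)) (f n)
                   & S (f n, chi n)])]].

(* H_f^alpha, A_f^alpha, B_f^alpha on their maximal domains *)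
Definition H_op (alpha : nat -> R) (f : nat -> H) : set (H * H) :=
  [set p | sq_summable (fun n => (alpha n)%:C * ip p.1 (f n)) /\
     series (fun n => ((alpha n)%:C * ip p.1 (f n)) *: f n) @ \oo --> p.2].
Definition A_op (alpha : nat -> R) (f : nat -> H) : set (H * H) :=
  [set p | sq_summable (fun n => (alpha n.+1)%:C * ip p.1 (f n.+1)) /\
     series (fun n => ((alpha n.+1)%:C * ip p.1 (f n.+1)) *: f n)
       @ \oo --> p.2].
Definition B_op (alpha : nat -> R) (f : nat -> H) : set (H * H) :=
  [set p | sq_summable (fun n => (alpha n.+1)%:C * ip p.1 (f n)) /\
     series (fun n => ((alpha n.+1)%:C * ip p.1 (f n)) *: f n.+1)
       @ \oo --> p.2].
End Defs.

(* Write x_n := <x, f_n>. A vector x lies in D^oo(H_f^alpha) exactly when every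
   weighted sequence (alpha_n^m x_n)_n is square summable. Since
   alpha_(n+1) <= (1 + r / alpha_1) alpha_n for n >= 1, this moment condition is
   preserved by H_f^alpha, A_f^alpha and B_f^alpha, which only reweight and shift
   coefficients; so all three belong to L(D^oo(H_f^alpha)).
   D^oo(H_f^alpha) contains the span of {f_n}, hence is dense, and the restriction
   of T_{f,phi} to it lies below the closed injective S = closure(T_{f,phi}|D).
   So does its closure T_phi^0: it is injective, T_phi^0 f_n = S f_n = phi_n, and
   (T_phi^0)^-1 has a larger adjoint than S^-1. Conjugating an operator of
   L(D^oo) by the injective T_phi^0 gives an operator of L(T_phi^0 D^oo). *)
From Pilot Require Import Defs.
From HB Require Import structures.
From mathcomp Require Import all_boot all_order all_algebra.
From mathcomp Require Import all_classical all_reals all_analysis.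
From mathcomp Require Import complex ring.
Set Implicit Arguments. Unset Strict Implicit. Unset Printing Implicit Defensive.
Import Order.TTheory GRing.Theory Num.Theory.
Import numFieldNormedType.Exports.
Local Open Scope ring_scope.
Local Open Scope complex_scope.
Local Open Scope classical_set_scope.

Section SquareSummable.
Variable R : realType.
Implicit Types (c d : nat -> R[i]).

Definition sqsum c N := \sum_(0 <= k < N) `|c k| ^+ 2.

Lemma sqsum_ge0 c N : 0 <= sqsum c N.
Proof. by apply: sumr_ge0 => k _; exact: exprn_ge0. Qed.

Lemma sqsum_le c N M : (N <= M)%N -> sqsum c N <= sqsum c M.
Proof.
move=> NM; rewrite /sqsum (big_cat_nat (leq0n N) NM) /= lerDl.
by apply: sumr_ge0 => k _; exact: exprn_ge0.
Qed.

Lemma cvg_complex_of_real (u : nat -> R) (l : R) : u @ \oo --> l ->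
  (fun n => (u n)%:C : R[i]^o) @ \oo --> (l%:C : R[i]^o).
Proof.
move=> /cvgrPdist_lt hu; apply/cvgrPdist_lt => e e0.
move: (e0); rewrite ltcE => /andP[/eqP hIm hRe].
apply: filterS (hu _ hRe) => n hn.
have -> : e = (complex.Re e)%:C by case: e {e0 hRe hn} hIm => a b /= ->.
by rewrite -rmorphB /= normc_def /= expr0n /= addr0 sqrtr_sqr ltcR.
Qed.

Lemma norm_complex_of_real_mul (a : R) (z : R[i]) : 0 <= a -> `|a%:C * z| = a%:C * `|z|.
Proof. by move=> a0; rewrite normrM ger0_norm ?ler0c. Qed.

Lemma sq_summableP c : sq_summable c <-> exists B, forall N, sqsum c N <= B.
Proof.
split.
  move=> [l hl]; have /cvg_seq_bounded [M [_ hM]] :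
    cvgn (series (fun n => `|c n| ^+ 2) : nat -> R[i]^o) by apply/cvg_ex; exists l.
  exists (M + 1) => N; rewrite -[sqsum _ _]ger0_norm ?sqsum_ge0 //.
  have -> : sqsum c N = series (fun n => `|c n| ^+ 2) N by rewrite seriesEnat.
  by apply: hM => //; rewrite ltrDl.
move=> [B hB].
pose t N := complex.Re (sqsum c N).
have tE N : (t N)%:C = sqsum c N.
  by apply: RRe_real; rewrite rpred_sum // => k _; rewrite rpredX // normr_real.
have t_nd : nondecreasing_seq t by move=> N M NM; rewrite -lecR !tE sqsum_le.
have t_ub : has_ubound (range t).
  by exists (complex.Re B) => _ [N _ <-]; move: (hB N); rewrite -tE lecE => /andP[].
exists (sup (range t))%:C.
have := cvg_complex_of_real (nondecreasing_cvgn t_nd t_ub).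
by apply: cvg_trans; apply: near_eq_cvg; near=> N; rewrite tE /sqsum seriesEnat.
Unshelve. all: by end_near.
Qed.

Lemma eq_sq_summable c d : c =1 d -> sq_summable c -> sq_summable d.
Proof. by move=> /funext ->. Qed.

Lemma sq_summable_le c d (K : R[i]) : 0 <= K ->
  (forall n, `|d n| <= K * `|c n|) -> sq_summable c -> sq_summable d.
Proof.
move=> K0 hdc /sq_summableP [B hB]; apply/sq_summableP; exists (K ^+ 2 * B) => N.
apply: le_trans (_ : K ^+ 2 * sqsum c N <= _); last by rewrite ler_wpM2l ?exprn_ge0.
rewrite /sqsum mulr_sumr; apply: ler_sum => k _.
by rewrite -exprMn ler_pXn2r ?qualifE /= ?mulr_ge0.
Qed.

Lemma sq_summable_shift c : sq_summable c <-> sq_summable (fun n => c n.+1).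
Proof.
split=> /sq_summableP [B hB]; apply/sq_summableP.
  exists B => N; apply: le_trans (hB N.+1).
  by rewrite /sqsum big_nat_recl //= lerDr exprn_ge0.
exists (`|c 0%N| ^+ 2 + B) => -[|N].
  by rewrite /sqsum big_geq // addr_ge0 ?exprn_ge0 // (le_trans _ (hB 0%N)) ?sqsum_ge0.
by rewrite /sqsum big_nat_recl //= lerD2l; exact: hB.
Qed.

Lemma sq_summable_finite c N : (forall n, (N <= n)%N -> c n = 0) -> sq_summable c.
Proof.
move=> c0; apply/sq_summableP; exists (sqsum c N) => M.
have [MN|NM] := leqP M N; first exact: sqsum_le.
rewrite /sqsum (big_cat_nat (leq0n N) (ltnW NM)) /= [X in _ + X]big1_seq ?addr0 //.
move=> k /andP[_]; rewrite mem_index_iota => /andP[Nk _].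
by rewrite c0 // normr0 expr0n.
Qed.

Lemma sq_summableZ (a : R[i]) c : sq_summable c -> sq_summable (fun n => a * c n).
Proof. by apply: sq_summable_le (normr_ge0 a) _ => n; rewrite normrM. Qed.

Lemma sqr_normD_le (a b : R[i]) : `|a + b| ^+ 2 <= `|a| ^+ 2 *+ 2 + `|b| ^+ 2 *+ 2.
Proof.
apply: le_trans (_ : (`|a| + `|b|) ^+ 2 <= _).
  by rewrite lerXn2r ?qualifE /= ?addr_ge0 // ler_normD.
have -> : `|a| ^+ 2 *+ 2 + `|b| ^+ 2 *+ 2 = (`|a| + `|b|) ^+ 2 + (`|a| - `|b|) ^+ 2.
  by ring.
by rewrite lerDl -realEsqr rpredB // normr_real.
Qed.

Lemma sq_summableD c d : sq_summable c -> sq_summable d ->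
  sq_summable (fun n => c n + d n).
Proof.
move=> /sq_summableP [B1 h1] /sq_summableP [B2 h2].
apply/sq_summableP; exists (B1 *+ 2 + B2 *+ 2) => N.
apply: le_trans (_ : sqsum c N *+ 2 + sqsum d N *+ 2 <= _); last first.
  by rewrite lerD // lerMn2r ?h1 ?h2 ?orbT.
by rewrite /sqsum -!sumrMnl -big_split /=; apply: ler_sum => k _; exact: sqr_normD_le.
Qed.

End SquareSummable.

Section InnerProduct.
Variables (R : realType) (H : completeNormedModType R[i]) (ip : H -> H -> R[i]).
Hypothesis hip : is_inner_product ip.

Lemma ipDl x y z : ip (x + y) z = ip x z + ip y z. Proof. by case: hip. Qed.
Lemma ipZl a x y : ip (a *: x) y = a * ip x y. Proof. by case: hip. Qed.
Lemma ipC x y : ip y x = (ip x y)^*. Proof. by case: hip. Qed.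
Lemma ipxx x : ip x x = `|x| ^+ 2. Proof. by case: hip. Qed.

Lemma ip0l y : ip 0 y = 0.
Proof. by rewrite -(scale0r 0) ipZl mul0r. Qed.

Lemma ipBl x y z : ip (x - y) z = ip x z - ip y z.
Proof. by rewrite ipDl -scaleN1r ipZl mulN1r. Qed.

Lemma ip0r x : ip x 0 = 0.
Proof. by rewrite ipC ip0l conjc0. Qed.

Lemma ipDr x y z : ip x (y + z) = ip x y + ip x z.
Proof. by rewrite ipC ipDl rmorphD /= -!ipC. Qed.

Lemma ipZr a x y : ip x (a *: y) = a^* * ip x y.
Proof. by rewrite ipC ipZl rmorphM /= -ipC. Qed.

Lemma ipBr x y z : ip x (y - z) = ip x y - ip x z.
Proof. by rewrite ipC ipBl rmorphB /= -!ipC. Qed.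

Lemma ip_suml (I : Type) (s : seq I) (P : pred I) (F : I -> H) y :
  ip (\sum_(i <- s | P i) F i) y = \sum_(i <- s | P i) ip (F i) y.
Proof. by elim/big_rec2: _ => [|i a b _ <-]; rewrite ?ip0l ?ipDl. Qed.

Lemma ip_sumr (I : Type) (s : seq I) (P : pred I) (F : I -> H) y :
  ip y (\sum_(i <- s | P i) F i) = \sum_(i <- s | P i) ip y (F i).
Proof. by elim/big_rec2: _ => [|i a b _ <-]; rewrite ?ip0r ?ipDr. Qed.

Definition orthonormal_seq (f : nat -> H) := forall n m, ip (f n) (f m) = (n == m)%:R.

Section Orthonormal.
Variable f : nat -> H.
Hypothesis hf : orthonormal_seq f.

Lemma ip_sum_orthonormal (a : nat -> R[i]) m N n :
  ip (\sum_(m <= k < N) a k *: f k) (f n) = if (m <= n < N)%N then a n else 0.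
Proof.
rewrite ip_suml (eq_bigr (fun k => if k == n then a k else 0)) => [|k _].
  by rewrite -big_mkcond big_nat1_eq.
by rewrite ipZl hf; case: eqP => _; rewrite ?mulr1 ?mulr0.
Qed.

Lemma norm_sum_orthonormal (a : nat -> R[i]) m N :
  `|\sum_(m <= k < N) a k *: f k| ^+ 2 = \sum_(m <= k < N) `|a k| ^+ 2.
Proof.
rewrite -ipxx ip_sumr big_nat_cond [RHS]big_nat_cond.
apply: eq_bigr => k /andP[/andP[mk kN] _].
by rewrite ipZr ip_sum_orthonormal mk kN mulrC normCK.
Qed.

Lemma bessel x N : \sum_(0 <= k < N) `|ip x (f k)| ^+ 2 <= `|x| ^+ 2.
Proof.
set P := \sum_(0 <= k < N) ip x (f k) *: f k.
have ipxP : ip x P = \sum_(0 <= k < N) `|ip x (f k)| ^+ 2.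
  by rewrite ip_sumr; apply: eq_bigr => k _; rewrite ipZr mulrC normCK.
have ipPx : ip P x = \sum_(0 <= k < N) `|ip x (f k)| ^+ 2.
  by rewrite ip_suml; apply: eq_bigr => k _; rewrite ipZl (ipC x (f k)) normCK.
have ipPP : ip P P = \sum_(0 <= k < N) `|ip x (f k)| ^+ 2.
  by rewrite ipxx norm_sum_orthonormal.
have := exprn_ge0 2 (normr_ge0 (x - P)).
rewrite -(ipxx (x - P)) ipBl !ipBr ipxP ipPx ipPP ipxx.
by rewrite opprB addrA subrK subr_ge0.
Qed.

Lemma norm_ip_orthonormal_le x m : `|ip x (f m)| <= `|x|.
Proof.
rewrite -(ler_pXn2r (_ : 0 < 2)%N) ?qualifE /= //.
apply: le_trans (bessel x m.+1).
by rewrite big_nat_recr //= lerDr; apply: sumr_ge0 => k _; exact: exprn_ge0.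
Qed.

Lemma ip_orthonormal_lim (u : nat -> H) y m a : u @ \oo --> y ->
  (\forall N \near \oo, ip (u N) (f m) = a) -> ip y (f m) = a.
Proof.
move=> uy ev; apply/eqP; rewrite -subr_eq0; apply: contraT => ne0.
have e0 : 0 < `|ip y (f m) - a| by rewrite normr_gt0.
have /cvgrPdist_lt/(_ _ e0) near_y := uy.
have [N [yuN uNa]] := filter_ex (filterI near_y ev).
have := le_lt_trans (norm_ip_orthonormal_le (y - u N) m) yuN.
by rewrite ipBl uNa ltxx.
Qed.

Lemma ip_orthonormal_series (c : nat -> R[i]) y m :
  series (fun k => c k *: f k) @ \oo --> y -> ip y (f m) = c m.
Proof.
move=> cy; apply: ip_orthonormal_lim cy _; near=> N.
rewrite seriesEnat /= ip_sum_orthonormal leq0n /=.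
suff -> : (m < N)%N by [].
by near: N; exact: nbhs_infty_gt.
Unshelve. all: by end_near.
Qed.

(* Riesz-Fischer: partial sums are Cauchy by orthogonality. *)
Lemma sq_summable_series_cvg (c : nat -> R[i]) :
  sq_summable c -> cvgn (series (fun k => c k *: f k)).
Proof.
move=> [l hl].
have /cauchy_seriesP hc : cauchy (series (fun n => `|c n| ^+ 2 : R[i]^o) @ \oo).
  by apply: cvg_cauchy; apply/cvg_ex; exists l.
apply/cauchy_cvgP/cauchy_seriesP => e e0.
apply: filterS (hc _ (exprn_gt0 2 e0)) => -[m n] /= hmn.
rewrite -(ltr_pXn2r (_ : 0 < 2)%N) ?qualifE /= ?(ltW e0) //.
rewrite norm_sum_orthonormal (le_lt_trans _ hmn) // ger0_norm //.
by apply: sumr_ge0 => k _; exact: exprn_ge0.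
Qed.

End Orthonormal.

Lemma ONB_series_expansion (f : nat -> H) z : ONB ip f ->
  series (fun k => ip z (f k) *: f k) @ \oo --> z.
Proof.
move=> [hf hcomplete].
have hs : sq_summable (fun k => ip z (f k)).
  by apply/sq_summableP; exists (`|z| ^+ 2) => N; exact: bessel.
have /cvg_ex [y hy] := sq_summable_series_cvg hf hs.
suff yz : y = z by rewrite yz in hy.
apply/eqP; rewrite -subr_eq0; apply/eqP/hcomplete => n.
by rewrite ipBl (ip_orthonormal_series hf n hy) subrr.
Qed.

End InnerProduct.

Section Weights.
Variables (R : realType) (alpha : nat -> R) (r : R).
Hypotheses (r_gt0 : 0 < r) (alpha0_ge0 : 0 <= alpha 0).
Hypothesis halpha : forall n, (1 <= n)%N ->
  [/\ alpha 0 < alpha n, alpha n < alpha n.+1 & alpha n.+1 <= alpha n + r].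

Lemma nondecreasing_weights : nondecreasing_seq alpha.
Proof.
apply/nondecreasing_seqP => -[|n]; first by have [/ltW] := halpha (leqnn 1).
by have [_ /ltW] := halpha (ltn0Sn n).
Qed.

Lemma weight1_gt0 : 0 < alpha 1.
Proof. by have [/(le_lt_trans alpha0_ge0)] := halpha (leqnn 1). Qed.

Lemma weights_ratio_ge0 : 0 <= 1 + r / alpha 1.
Proof. by rewrite addr_ge0 // divr_ge0 ?ltW ?weight1_gt0. Qed.

Lemma weights_succ_le n : (1 <= n)%N -> alpha n.+1 <= (1 + r / alpha 1) * alpha n.
Proof.
move=> n_ge1; have [_ _ /le_trans] := halpha n_ge1; apply.
rewrite mulrDl mul1r lerD2l -mulrA ler_peMr ?(ltW r_gt0) //.
by rewrite mulrC ler_pdivlMr ?weight1_gt0 // mul1r nondecreasing_weights.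
Qed.

End Weights.

Section Moments.
Variables (R : realType) (H : completeNormedModType R[i]) (ip : H -> H -> R[i]).
Hypothesis hip : is_inner_product ip.
Variables (f : nat -> H) (alpha : nat -> R).
Hypothesis hf : orthonormal_seq ip f.

Local Notation Hf := (H_op ip alpha f).
Local Notation Af := (A_op ip alpha f).
Local Notation Bf := (B_op ip alpha f).

Definition finite_moments (x : H) : Prop :=
  forall m, sq_summable (fun n => (alpha n ^+ m.+1)%:C * ip x (f n)).

Lemma finite_moments_subspace : Defs.subspace finite_moments.
Proof.
split.
- by move=> m; apply: (@sq_summable_finite _ _ 0) => n _; rewrite ip0l // mulr0.
- move=> x y hx hy m; apply: eq_sq_summable (sq_summableD (hx m) (hy m)) => n.
  by rewrite ipDl // mulrDr.
- move=> a x hx m; apply: eq_sq_summable (sq_summableZ a (hx m)) => n.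
  by rewrite ipZl // mulrCA.
Qed.

Lemma lin_span_finite_moments : lin_span f `<=` finite_moments.
Proof.
move=> _ [N [c ->]] m; apply: (@sq_summable_finite _ _ N) => n Nn.
rewrite -(big_mkord xpredT (fun i => c i *: f i)) ip_sum_orthonormal //.
by rewrite leq0n ltnNge Nn mulr0.
Qed.

Lemma H_op_coef x y : Hf (x, y) -> forall n, ip y (f n) = (alpha n)%:C * ip x (f n).
Proof. by case=> _ /= hy n; rewrite (ip_orthonormal_series hip hf n hy). Qed.

Lemma op_pow_H_op_coef m x y : op_pow Hf m (x, y) ->
  forall n, ip y (f n) = (alpha n ^+ m)%:C * ip x (f n).
Proof.
elim: m y => [y /= -> n|m IH y [z [/IH hz /H_op_coef hy]] n]; first by rewrite mul1r.
by rewrite hy hz mulrA -rmorphM /= -exprS.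
Qed.

Lemma in_L_H_op : in_L Hf finite_moments.
Proof.
move=> x hx; split=> [|y /H_op_coef hy m].
  have hs : sq_summable (fun n => (alpha n)%:C * ip x (f n)).
    by apply: eq_sq_summable (hx 0%N) => n; rewrite expr1.
  by have /cvg_ex [y hy] := sq_summable_series_cvg hip hf hs; exists y.
by apply: eq_sq_summable (hx m.+1) => n; rewrite hy mulrA -rmorphM /= exprSr.
Qed.

Lemma Dinf_H_op : Dinf Hf = finite_moments.
Proof.
apply/funext => x; apply/propext; split=> [hx m | hx n _].
  have [y [z [/op_pow_H_op_coef hz [hs _]]]] := hx m.+1 isT.
  by apply: eq_sq_summable hs => n; rewrite hz mulrA -rmorphM /= exprS.
suff [y [hy _]] : exists y, op_pow Hf n (x, y) /\ finite_moments y by exists y.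
elim: n => [|n [y [hy my]]]; first by exists x.
have [[z hz] /(_ z hz) mz] := in_L_H_op my.
by exists z; split=> //; exists y.
Qed.

Hypotheses (alpha0_ge0 : 0 <= alpha 0) (alpha_nd : nondecreasing_seq alpha).

Lemma weight_ge0 n : 0 <= alpha n.
Proof. exact: le_trans alpha0_ge0 (alpha_nd (leq0n n)). Qed.

Lemma in_L_A_op : in_L Af finite_moments.
Proof.
move=> x hx; split=> [|w hw m].
  have /sq_summable_shift hs : sq_summable (fun n => (alpha n)%:C * ip x (f n)).
    by apply: eq_sq_summable (hx 0%N) => n; rewrite expr1.
  by have /cvg_ex [w hw] := sq_summable_series_cvg hip hf hs; exists w.
have {}hw n : ip w (f n) = (alpha n.+1)%:C * ip x (f n.+1).
  by case: hw => _ /= hw; rewrite (ip_orthonormal_series hip hf n hw).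
apply: (@sq_summable_le _ (fun n => (alpha n.+1 ^+ m.+2)%:C * ip x (f n.+1)) _ 1).
- exact: ler01.
- move=> n; rewrite hw mul1r mulrA -rmorphM /=.
  rewrite !norm_complex_of_real_mul ?exprn_ge0 ?mulr_ge0 ?exprn_ge0 ?weight_ge0 //.
  apply: ler_wpM2r => //; rewrite lecR [leRHS]exprSr.
  apply: ler_wpM2r; first exact: weight_ge0.
  by rewrite ler_pXn2r ?nnegrE ?weight_ge0 ?alpha_nd ?leqnSn.
- by have /sq_summable_shift hs := hx m.+1; exact: hs.
Qed.

Variable K : R.
Hypotheses (K_ge0 : 0 <= K)
  (alphaS_le : forall n, (1 <= n)%N -> alpha n.+1 <= K * alpha n).

Lemma finite_moments_weight_succ m x : finite_moments x ->
  sq_summable (fun n => (alpha n.+1 ^+ m.+1)%:C * ip x (f n)).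
Proof.
move=> hx; apply/sq_summable_shift.
apply: (@sq_summable_le _ (fun n => (alpha n.+1 ^+ m.+1)%:C * ip x (f n.+1)) _
  (K ^+ m.+1)%:C).
- by rewrite ler0c exprn_ge0.
- move=> n; rewrite !norm_complex_of_real_mul ?exprn_ge0 ?weight_ge0 // mulrA.
  apply: ler_wpM2r => //; rewrite -rmorphM lecR -exprMn.
  by rewrite ler_pXn2r ?nnegrE ?mulr_ge0 ?weight_ge0 ?alphaS_le.
- by have /sq_summable_shift hs := hx m; exact: hs.
Qed.

Lemma in_L_B_op : in_L Bf finite_moments.
Proof.
move=> x hx; split=> [|w [_ hw] m].
  have hs : sq_summable (fun n => (alpha n.+1)%:C * ip x (f n)).
    by apply: eq_sq_summable (finite_moments_weight_succ 0 hx) => n; rewrite expr1.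
  have hfS : orthonormal_seq ip (fun n => f n.+1) by move=> n k; rewrite hf.
  by have /cvg_ex [w hw] := sq_summable_series_cvg hip hfS hs; exists w.
pose c n := if n is k.+1 then (alpha k.+1)%:C * ip x (f k) else 0.
have cw : series (fun k => c k *: f k) @ \oo --> w.
  rewrite -cvg_shiftS; suff -> : [sequence series (fun k => c k *: f k) n.+1]_n =
    series (fun n => ((alpha n.+1)%:C * ip x (f n)) *: f n.+1) by [].
  by apply/funext => N; rewrite /= !seriesEnat /= big_nat_recl //= scale0r add0r.
have {}hw n : ip w (f n) = c n := ip_orthonormal_series hip hf n cw.
apply/sq_summable_shift.
apply: eq_sq_summable (finite_moments_weight_succ m.+1 hx) => n.
by rewrite hw /= mulrA -rmorphM /= exprSr.
Qed.

End Moments.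

Lemma denseS (T : topologicalType) (A B : set T) : A `<=` B -> dense A -> dense B.
Proof. by move=> AB dA O O0 oO; have [x [Ox /AB Bx]] := dA O O0 oO; exists x. Qed.

Lemma closure_preimage (T U : topologicalType) (h : T -> U) (A : set T) (B : set U) :
  continuous h -> closed B -> (forall x, A x -> B (h x)) ->
  forall x, closure A x -> B (h x).
Proof.
move=> hc cB AB x Ax; change ((h @^-1` B) x).
have /closure_id -> : closed (h @^-1` B) by apply: preimage_closed => // y _; exact: hc.
exact: closureS AB _ Ax.
Qed.

Section Graphs.
Variables (R : realType) (H : completeNormedModType R[i]).
Implicit Types (G S : set (H * H)) (D : set H).

Definition linear_graph G : Prop :=
  [/\ G 0, forall p q, G p -> G q -> G (p + q) & forall a p, G p -> G (a *: p)].

Lemma linear_graph_closure G : linear_graph G -> linear_graph (op_closure G).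
Proof.
have cl := @closed_closure _ G.
case=> G0 GD GZ; rewrite /op_closure; split; first exact: subset_closure.
- move=> p q Gp; apply: (closure_preimage (h := fun q => p + q) _ cl) => [z|q' Gq'].
    by apply: cvgD; [exact: cvg_cst | exact: cvg_id].
  move: Gp; apply: (closure_preimage (h := fun p : H * H => p + q') _ cl) => [z|p' Gp'].
    by apply: cvgD; [exact: cvg_id | exact: cvg_cst].
  by apply: subset_closure; exact: GD.
- move=> a; apply: (closure_preimage (h := fun p : H * H => a *: p) _ cl).
    exact: scaler_continuous.
  by move=> p' Gp'; apply: subset_closure; exact: GZ.
Qed.

Lemma linear_graph_inv G : linear_graph G -> linear_graph (op_inv G).
Proof.
case=> G0 GD GZ; split; first exact: G0.
- by move=> p q Gp Gq; exact: GD Gp Gq.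
- by move=> a p Gp; exact: GZ Gp.
Qed.

Lemma linear_graph_restr G D : linear_graph G -> Defs.subspace D ->
  linear_graph (op_restr G D).
Proof.
case=> G0 GD GZ [D0 DD DZ]; split; first by split.
- by move=> p q [Gp Dp] [Gq Dq]; split; [exact: GD | exact: DD].
- by move=> a p [Gp Dp]; split; [exact: GZ | exact: DZ].
Qed.

Lemma is_operator_sub G S : linear_graph G -> G `<=` S -> is_operator S ->
  is_operator G.
Proof.
case=> G0 GD GZ GS [_ _ _ Sfun]; split; [exact: G0 | exact: GD | exact: GZ |].
by move=> x y1 y2 /GS h1 /GS; exact: Sfun.
Qed.

Lemma op_domS G S : G `<=` S -> op_dom G `<=` op_dom S.
Proof. by move=> GS x [y /GS]; exists y. Qed.

Lemma op_adjointS (ip : H -> H -> R[i]) G S : G `<=` S ->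
  op_adjoint ip S `<=` op_adjoint ip G.
Proof. by move=> GS p hp q /GS; exact: hp. Qed.

Lemma constructing_pair_closure (ip : H -> H -> R[i]) f S chi G :
  constructing_pair ip f S chi -> linear_graph G -> G `<=` S ->
  dense (op_dom G) -> dense (op_dom (op_inv G)) -> (forall n, op_dom G (f n)) ->
  constructing_pair ip f (op_closure G) chi.
Proof.
case=> hf Sop _ Sclosed [Sinv_op _ Sf] Glin GS Gdense Ginv_dense Gf.
have SE : S = closure S := (closure_id S).1 Sclosed.
have clGS : op_closure G `<=` S by move=> p /(closureS GS); rewrite -SE.
have clGinvS : op_inv (op_closure G) `<=` op_inv S by move=> p /clGS.
have clGlin := linear_graph_closure Glin.
split=> //; last split.
- exact: is_operator_sub clGlin clGS Sop.
- exact: denseS (op_domS (@subset_closure _ G)) Gdense.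
- exact: closed_closure.
- exact: is_operator_sub (linear_graph_inv clGlin) clGinvS Sinv_op.
- apply: denseS Ginv_dense; apply: op_domS => p Gp.
  exact: (@subset_closure _ G (p.2, p.1) Gp).
move=> n; have [y Gy] := Gf n; have [_ [z Sz] Schi] := Sf n.
have [_ _ _ Sfun] := Sop.
split; first by exists y; exact: subset_closure.
  by exists z; exact: op_adjointS clGinvS _ Sz.
by rewrite -(Sfun _ _ _ (clGS _ (subset_closure Gy)) Schi); exact: subset_closure.
Qed.

Lemma in_L_conj T X D : is_operator (op_inv T) -> D `<=` op_dom T -> in_L X D ->
  in_L (op_comp T (op_comp X (op_inv T))) (op_image T D).
Proof.
move=> [_ _ _ Tinj] DT XD y [x [Dx Tx]]; have [[w Xxw] XDD] := XD x Dx.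
split=> [|z [w' [[x' [Tx' Xx'w']] Tw'z]]].
  have [z Twz] := DT w (XDD w Xxw).
  by exists z, w; split=> //; exists x.
have x'x : x' = x := Tinj _ _ _ Tx' Tx.
by exists w'; split=> //; apply: XDD; rewrite -x'x.
Qed.

End Graphs.

Section CoefficientOperator.
Variables (R : realType) (H : completeNormedModType R[i]) (ip : H -> H -> R[i]).
Hypothesis hip : is_inner_product ip.

Lemma lin_span_elt (f : nat -> H) n : lin_span f (f n).
Proof.
exists n.+1, (fun k => (k == n)%:R).
rewrite big_ord_recr /= eqxx scale1r big1 ?add0r // => i _.
by rewrite /= (ltn_eqF (ltn_ord i)) scale0r.
Qed.

Lemma dense_lin_span (f : nat -> H) : ONB ip f -> dense (lin_span f).
Proof.
move=> hONB O [z Oz] oO.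
have near_z : \forall N \near \oo, O (series (fun k => ip z (f k) *: f k) N).
  by apply: (ONB_series_expansion (z := z) hip hONB); exact: open_nbhs_nbhs.
have [N ON] := filter_ex near_z; exists (series (fun k => ip z (f k) *: f k) N).
by split=> //; exists N, (fun k => ip z (f k)); rewrite seriesEord.
Qed.

Variables (f phi : nat -> H).
Hypothesis hf : orthonormal_seq ip f.
Local Notation T := (T_op ip f phi).

Lemma T_op_dom : coef_dom ip phi `<=` op_dom T.
Proof.
by move=> x hx; have /cvg_ex [y hy] := sq_summable_series_cvg hip hf hx; exists y.
Qed.

Lemma linear_graph_T_op : linear_graph T.
Proof.
split.
- split; first by apply: (@sq_summable_finite _ _ 0) => n _; rewrite /= ip0l.
  rewrite (_ : series _ = cst 0); first exact: cvg_cst.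
  by apply/funext => N; rewrite seriesEnat /= big1 // => k _; rewrite ip0l // scale0r.
- move=> [x1 y1] [x2 y2] [c1 s1] [c2 s2]; split=> /=.
    by apply: eq_sq_summable (sq_summableD c1 c2) => n; rewrite ipDl.
  rewrite (_ : (fun n => _) =
    (fun n => ip x1 (phi n) *: f n) + (fun n => ip x2 (phi n) *: f n)).
    by rewrite seriesD; exact: cvgD.
  by apply/funext => n; rewrite /= ipDl // scalerDl.
- move=> a [x y] [c s]; split=> /=.
    by apply: eq_sq_summable (sq_summableZ a c) => n; rewrite ipZl.
  rewrite (_ : (fun n => _) = a *: (fun n => ip x (phi n) *: f n)).
    by rewrite seriesZ; exact: cvgZl_tmp.
  by apply/funext => n; rewrite /= ipZl // -scalerA.
Qed.

End CoefficientOperator.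

Section Restriction.
Variables (R : realType) (H : completeNormedModType R[i]) (ip : H -> H -> R[i]).
Hypothesis hip : is_inner_product ip.
Variables (f phi : nat -> H) (D : set H) (alpha : nat -> R) (K : R).
Hypotheses (hf : ONB ip f) (D_coef : D `<=` coef_dom ip phi)
  (hcp : constructing_pair ip f (op_closure (op_restr (T_op ip f phi) D)) phi).
Hypotheses (alpha0_ge0 : 0 <= alpha 0) (alpha_nd : nondecreasing_seq alpha)
  (K_ge0 : 0 <= K) (alphaS_le : forall n, (1 <= n)%N -> alpha n.+1 <= K * alpha n).

Local Notation Dinf_f := (Dinf (H_op ip alpha f)).
Local Notation G := (op_restr (T_op ip f phi) Dinf_f).

Lemma constructing_pair_Dinf :
  Dinf_f `<=` D -> dense (op_image (T_op ip f phi) Dinf_f) ->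
  let T0 := op_closure G in
  let D0 := op_image T0 Dinf_f in
  [/\ constructing_pair ip f T0 phi,
      in_L (op_comp T0 (op_comp (H_op ip alpha f) (op_inv T0))) D0,
      in_L (op_comp T0 (op_comp (A_op ip alpha f) (op_inv T0))) D0 &
      in_L (op_comp T0 (op_comp (B_op ip alpha f) (op_inv T0))) D0].
Proof.
move=> Dinf_D T_dense T0 D0.
have Dinf_E : Dinf_f = finite_moments ip f alpha := Dinf_H_op hip alpha hf.1.
have G_lin : linear_graph G.
  apply: linear_graph_restr (linear_graph_T_op hip f phi) _.
  by rewrite Dinf_E; exact: finite_moments_subspace hip f alpha.
have Dinf_G : Dinf_f `<=` op_dom G.
  move=> x Dx; have hx := D_coef (Dinf_D x Dx).
  by have [y Txy] := T_op_dom hip (phi := phi) hf.1 hx; exists y.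
have span_Dinf : lin_span f `<=` Dinf_f.
  by rewrite Dinf_E; exact (lin_span_finite_moments hip alpha hf.1).
have cp : constructing_pair ip f T0 phi.
  apply: constructing_pair_closure hcp G_lin _ _ _ _.
  - by move=> p [Tp Dp]; apply: subset_closure; split=> //; exact: Dinf_D.
  - exact: denseS Dinf_G (denseS span_Dinf (dense_lin_span hip hf)).
  - by apply: denseS T_dense => y [x [Dx Txy]]; exists x.
  - by move=> n; apply/Dinf_G/span_Dinf; exact: lin_span_elt.
have Dinf_T0 : Dinf_f `<=` op_dom T0.
  by move=> x /Dinf_G [y Gy]; exists y; exact: subset_closure.
have [_ _ _ _ [T0inv _ _]] := cp.
split=> //; apply: in_L_conj T0inv Dinf_T0 _; rewrite Dinf_E.
- exact (in_L_H_op hip hf.1).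
- exact (in_L_A_op hip hf.1 alpha0_ge0 alpha_nd).
- exact (in_L_B_op hip hf.1 alpha0_ge0 alpha_nd K_ge0 alphaS_le).
Qed.

End Restriction.

Theorem theorem4p7 (R : realType) (H : completeNormedModType R[i])
  (ip : H -> H -> R[i]) (phi psi f g : nat -> H) (D E : set H)
  (alpha : nat -> R) (r : R) :
  is_inner_product ip ->
  biorthogonal ip phi psi ->
  dense_subspace D -> dense_subspace E ->
  quasi_basis ip phi psi D E ->
  lin_span phi `<=` E -> E `<=` coef_dom ip psi ->
  lin_span psi `<=` D -> D `<=` coef_dom ip phi ->
  ONB ip f ->
  self_adjoint ip (op_closure (op_restr (T_op ip f phi) D)) ->
  positive_op ip (op_closure (op_restr (T_op ip f phi) D)) ->
  constructing_pair ip f (op_closure (op_restr (T_op ip f phi) D)) phi ->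
  ONB ip g ->
  self_adjoint ip (op_closure (op_restr (T_op ip g psi) E)) ->
  positive_op ip (op_closure (op_restr (T_op ip g psi) E)) ->
  constructing_pair ip g (op_closure (op_restr (T_op ip g psi) E)) psi ->
  0 < r -> 0 <= alpha 0 ->
  (forall n, (1 <= n)%N ->
     [/\ alpha 0 < alpha n, alpha n < alpha n.+1 & alpha n.+1 <= alpha n + r]) ->
  (* (1) *)
  (Dinf (H_op ip alpha f) `<=` D ->
   dense (op_image (T_op ip f phi) (Dinf (H_op ip alpha f))) ->
   let T0 := op_closure (op_restr (T_op ip f phi) (Dinf (H_op ip alpha f))) in
   let D0 := op_image T0 (Dinf (H_op ip alpha f)) in
   [/\ constructing_pair ip f T0 phi,
       in_L (op_comp T0 (op_comp (H_op ip alpha f) (op_inv T0))) D0,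
       in_L (op_comp T0 (op_comp (A_op ip alpha f) (op_inv T0))) D0 &
       in_L (op_comp T0 (op_comp (B_op ip alpha f) (op_inv T0))) D0])
  /\
  (* (2) *)
  (Dinf (H_op ip alpha g) `<=` E ->
   dense (op_image (T_op ip g psi) (Dinf (H_op ip alpha g))) ->
   let T0 := op_closure (op_restr (T_op ip g psi) (Dinf (H_op ip alpha g))) in
   let D0 := op_image T0 (Dinf (H_op ip alpha g)) in
   [/\ constructing_pair ip g T0 psi,
       in_L (op_comp T0 (op_comp (H_op ip alpha g) (op_inv T0))) D0,
       in_L (op_comp T0 (op_comp (A_op ip alpha g) (op_inv T0))) D0 &
       in_L (op_comp T0 (op_comp (B_op ip alpha g) (op_inv T0))) D0]).
Proof.
move=> hip _ _ _ _ _ E_coef _ D_coef hf _ _ hcpf hg _ _ hcpg r_gt0 alpha0_ge0 halpha.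
have alpha_nd := nondecreasing_weights halpha.
have K_ge0 := weights_ratio_ge0 r_gt0 alpha0_ge0 halpha.
have alphaS_le := weights_succ_le r_gt0 alpha0_ge0 halpha.
split.
- exact (constructing_pair_Dinf hip hf D_coef hcpf alpha0_ge0 alpha_nd K_ge0 alphaS_le).
- exact (constructing_pair_Dinf hip hg E_coef hcpg alpha0_ge0 alpha_nd K_ge0 alphaS_le).
Qed.
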